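(* Let $N\ge3$. For $p>p_{\rm S}=\frac{N+2}{N-2}$ let $\underline\Theta=\underline\Theta(p)\in(0,\pi)$ be the number such that problem (P$_\Theta$) has no regular solution for $\Theta\in(0,\underline\Theta)$ and has a regular solution for every $\Theta\in(\underline\Theta,\pi)$, and let $\Theta^*=\Theta^*(p)$ be as in the context. Then $\underline\Theta(p)\to\pi$ as $p\to\infty$; since $\underline\Theta\le\Theta^*$, also $\Theta^*(p)\to\pi$ as $p\to\infty$. Moreover, when $N=3$, for every $p\ge5$ problem (P$_\Theta$) has no regular solution for $\Theta\in(0,\pi-\arcsin\frac{4}{p-1}]$; in particular $\underline\Theta\ge\pi-\arcsin\frac{4}{p-1}$ for $p>5$.
   Context: For $\Theta\in(0,\pi)$, problem (P$_\Theta$) is: $U''+(N-1)\frac{\cos\theta}{\sin\theta}U'+U^p=0$ on $(0,\Theta)$, $U(\Theta)=0$, $U>0$ on $[0,\Theta)$; a regular solution is one with $U\in C^2[0,\Theta]$, $U'(0)=0$. $\Theta^*\in(0,\pi)$ is the first positive zero of the unique solution $U^*$ of $U''+(N-1)\frac{\cos\theta}{\sin\theta}U'+|U|^{p-1}U=0$ with $U^*(\theta)=a(\cos\frac\theta2)^{-(N-2)}(2\tan\frac\theta2)^{-\mu}(1+o(1))$ as $\theta\downarrow0$, $\mu=\frac{2}{p-1}$, $a=\{\mu(N-2-\mu)\}^{\mu/2}$. *)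

From Stdlib Require Import Reals.
Open Scope R_scope.

Definition pS (N : nat) : R := (INR N + 2) / (INR N - 2).

Definition deriv_within (a b : R) (f : R -> R) (x l : R) : Prop :=
  forall eps, eps > 0 -> exists delta, delta > 0 /\
    forall h, h <> 0 -> Rabs h < delta -> a <= x + h <= b ->
      Rabs ((f (x + h) - f x) / h - l) < eps.

Definition cont_within (a b : R) (g : R -> R) (x : R) : Prop :=
  forall eps, eps > 0 -> exists delta, delta > 0 /\
    forall y, a <= y <= b -> Rabs (y - x) < delta -> Rabs (g y - g x) < eps.

(* U is a regular solution of (P_Theta):
   U in C^2[0,Theta], U'(0)=0, U''+(N-1)cot(t)U'+U^p=0 on (0,Theta),
   U(Theta)=0, U>0 on [0,Theta). *)
Definition regular_sol (N : nat) (p Theta : R) (U : R -> R) : Prop :=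
  exists U1 U2 : R -> R,
    (forall x, 0 <= x <= Theta -> deriv_within 0 Theta U x (U1 x)) /\
    (forall x, 0 <= x <= Theta -> deriv_within 0 Theta U1 x (U2 x)) /\
    (forall x, 0 <= x <= Theta -> cont_within 0 Theta U2 x) /\
    U1 0 = 0 /\
    U Theta = 0 /\
    (forall x, 0 <= x < Theta -> 0 < U x) /\
    (forall x, 0 < x < Theta ->
       U2 x + (INR N - 1) * (cos x / sin x) * U1 x + Rpower (U x) p = 0).

Definition spow (p u : R) : R :=
  if Rlt_dec 0 (Rabs u) then Rpower (Rabs u) (p - 1) * u else 0.

Definition mu (p : R) : R := 2 / (p - 1).
Definition acoef (N : nat) (p : R) : R :=
  Rpower (mu p * (INR N - 2 - mu p)) (mu p / 2).

Definition sing_profile (N : nat) (p t : R) : R :=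
  acoef N p * Rpower (cos (t / 2)) (- (INR N - 2))
            * Rpower (2 * tan (t / 2)) (- mu p).

(* Ts is Theta^*(p): Ts in (0,pi) is the first positive zero of a solution U
   of U''+(N-1)cot U'+|U|^{p-1}U=0 (classical, on (0,T1) with T1 > Ts)
   satisfying U(t) = sing_profile(t) (1 + o(1)) as t -> 0+. *)
Definition is_Theta_star (N : nat) (p Ts : R) : Prop :=
  0 < Ts < PI /\
  exists (U U1 U2 : R -> R) (T1 : R),
    Ts < T1 <= PI /\
    (forall x, 0 < x < T1 ->
       derivable_pt_lim U x (U1 x) /\ derivable_pt_lim U1 x (U2 x) /\
       U2 x + (INR N - 1) * (cos x / sin x) * U1 x + spow p (U x) = 0) /\
    (forall eps, eps > 0 -> exists delta, delta > 0 /\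
       forall t, 0 < t < delta ->
         Rabs (U t - sing_profile N p t) <= eps * Rabs (sing_profile N p t)) /\
    (forall x, 0 < x < Ts -> 0 < U x) /\
    U Ts = 0.

Definition tends_at_infty (f : R -> R) (L : R) : Prop :=
  forall eps, eps > 0 -> exists M, forall p, p > M -> Rabs (f p - L) < eps.

From Stdlib Require Import Reals Lra Lia.
From Coquelicot Require Import Coquelicot.
Open Scope R_scope.

(* Write N = L + 2, w = sin^(N-1) and let G be the primitive of 1/w vanishing at PI/2.
   For theta in (0, PI) and t = G(theta), along a positive solution U of the equation on
   (0, T) with T <= theta, the Pohozaev-type functional
     P = - w^2 (t - G) (U'^2/2 + U^(p+1)/(p+1)) - w U U'/2
   satisfies P' = w U^(p+1) E / (2(p+1)), where E = p + 3 - 4 (N-1) sin^(N-2) cos (t - G).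
   Since t >= G on (0, T), limsup P <= 0 at T, where U vanishes; at 0, P tends to 0 along
   a sequence both for regular solutions and for the singular solution defining Theta^*,
   because there U = O(r^-mu) with 2 mu < N - 2.  So if E >= 0 on (0, T), the nondecreasing
   P is identically 0 and E vanishes in every subinterval.  As p -> oo, E > 0 on (0, theta)
   for any fixed theta < PI; this excludes regular solutions up to theta and forces
   Theta^* > theta.  For N = 3 and theta = PI - asin (4/(p-1)), E is a nonnegative
   multiple of ((1+S) sin - C cos)^2, which vanishes only once in (0, PI). *)

Lemma Rpower_pos x y : 0 < Rpower x y.
Proof. unfold Rpower; apply exp_pos. Qed.

Lemma sin_le_id y : 0 <= y -> sin y <= y.
Proof.
  intros Hy. destruct (Req_dec y 0) as [->|Hne]; [rewrite sin_0; lra|].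
  destruct (MVT_cor2 sin cos 0 y) as [c [Hc _]]; [lra| intros; apply derivable_pt_lim_sin|].
  rewrite sin_0 in Hc. pose proof (COS_bound c). nra.
Qed.

Lemma sin_pow_pos_le1 x L : 0 < x < PI -> 0 < sin x ^ L <= 1.
Proof.
  intros Hx. pose proof (sin_gt_0 x ltac:(lra) ltac:(lra)). pose proof (SIN_bound x).
  split; [apply pow_lt; lra|]. rewrite <- (pow1 L). apply pow_incr; lra.
Qed.

Lemma cos_ge_1_sub_sqr y : 0 <= y <= 2 -> 1 - y ^ 2 / 2 <= cos y.
Proof.
  intros Hy. replace y with (2 * (y / 2)) at 2 by field. rewrite cos_2a_sin.
  pose proof (sin_le_id (y / 2) ltac:(lra)).
  assert (0 <= sin (y / 2)) by (apply sin_ge_0; pose proof PI2_1; lra).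
  nra.
Qed.

Lemma sin_ge_half_id y : 0 <= y <= 1 -> y / 2 <= sin y.
Proof.
  intros Hy. destruct (Req_dec y 0) as [->|Hne]; [rewrite sin_0; lra|].
  destruct (MVT_cor2 sin cos 0 y) as [c [Hc Hc2]]; [lra| intros; apply derivable_pt_lim_sin|].
  rewrite sin_0 in Hc. pose proof (cos_ge_1_sub_sqr c ltac:(lra)). nra.
Qed.

Lemma tan_ge_half_id y : 0 < y <= 1 -> y / 2 <= tan y.
Proof.
  intros Hy. unfold tan. pose proof (sin_ge_half_id y ltac:(lra)).
  pose proof (cos_ge_1_sub_sqr y ltac:(lra)). pose proof (COS_bound y).
  assert (0 < cos y) by nra.
  apply Rle_trans with (sin y); auto.
  apply Rmult_le_reg_r with (cos y); auto. unfold Rdiv. rewrite Rmult_assoc, Rinv_l; nra.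
Qed.

Lemma asin_pos S : 0 < S <= 1 -> 0 < asin S.
Proof.
  intros HS. pose proof (asin_bound S).
  destruct (Rle_or_lt (asin S) 0) as [h|h]; auto.
  assert (0 <= sin (- asin S)) by (apply sin_ge_0; lra).
  rewrite sin_neg, sin_asin in H0 by lra. lra.
Qed.

Lemma nondecreasing_of_deriv_nonneg (f f' : R -> R) a b :
  (forall x, a < x < b -> derivable_pt_lim f x (f' x)) ->
  (forall x, a < x < b -> 0 <= f' x) ->
  forall x y, a < x -> x <= y -> y < b -> f x <= f y.
Proof.
  intros Hd Hpos x y Hx Hxy Hy.
  destruct (Req_dec x y) as [<-|Hne]; [lra|].
  destruct (MVT_cor2 f f' x y) as [c [Hc Hcxy]]; [lra| intros c Hc; apply Hd; lra|].
  pose proof (Hpos c ltac:(lra)). nra.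
Qed.

Lemma derivable_pt_lim_deriv_within a b f x l :
  derivable_pt_lim f x l -> deriv_within a b f x l.
Proof.
  intros H e He. destruct (H e He) as [d Hd].
  exists d. split; [apply cond_pos|]. intros h Hh0 Hh _. now apply Hd.
Qed.

Lemma deriv_within_interior a b f x l :
  deriv_within a b f x l -> a < x < b -> derivable_pt_lim f x l.
Proof.
  intros H Hx e He. destruct (H e He) as [d [Hd Hh]].
  assert (Hm : 0 < Rmin d (Rmin (x - a) (b - x))) by (repeat apply Rmin_pos; lra).
  exists (mkposreal _ Hm). intros h Hh0 Hh1. simpl in Hh1.
  pose proof (Rmin_l d (Rmin (x - a) (b - x))). pose proof (Rmin_r d (Rmin (x - a) (b - x))).
  pose proof (Rmin_l (x - a) (b - x)). pose proof (Rmin_r (x - a) (b - x)).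
  apply Hh; auto; [lra|]. apply Rabs_lt_between in Hh1. lra.
Qed.

Lemma deriv_within_cont a b f x l : deriv_within a b f x l -> cont_within a b f x.
Proof.
  intros H e He. destruct (H 1 ltac:(lra)) as [d [Hd Hh]].
  pose proof (Rabs_pos l).
  exists (Rmin d (e / (Rabs l + 1))). split; [apply Rmin_pos; auto; apply Rdiv_lt_0_compat; lra|].
  intros y Hy Hyx. destruct (Req_dec y x) as [->|Hne]; [rewrite Rminus_diag, Rabs_R0; lra|].
  pose proof (Rmin_l d (e / (Rabs l + 1))). pose proof (Rmin_r d (e / (Rabs l + 1))).
  specialize (Hh (y - x) ltac:(lra) ltac:(lra) ltac:(replace (x + (y - x)) with y by ring; lra)).
  replace (x + (y - x)) with y in Hh by ring.
  assert (Hq : Rabs ((f y - f x) / (y - x)) < Rabs l + 1).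
  { replace ((f y - f x) / (y - x)) with (l + ((f y - f x) / (y - x) - l)) by ring.
    pose proof (Rabs_triang l ((f y - f x) / (y - x) - l)). lra. }
  replace (f y - f x) with ((f y - f x) / (y - x) * (y - x)) by (field; lra).
  rewrite Rabs_mult.
  assert (Rabs (y - x) * (Rabs l + 1) < e).
  { apply Rmult_lt_reg_r with (/ (Rabs l + 1)); [apply Rinv_0_lt_compat; lra|].
    rewrite Rmult_assoc, Rinv_r by lra. lra. }
  pose proof (Rabs_pos ((f y - f x) / (y - x))). pose proof (Rabs_pos (y - x)). nra.
Qed.

Lemma cont_within_bounded a b f x :
  cont_within a b f x ->
  exists d, d > 0 /\ forall y, a <= y <= b -> Rabs (y - x) < d -> Rabs (f y) <= Rabs (f x) + 1.
Proof.
  intros H. destruct (H 1 ltac:(lra)) as [d [Hd Hc]]. exists d. split; auto.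
  intros y Hy Hyx. specialize (Hc y Hy Hyx).
  pose proof (Rabs_triang (f y - f x) (f x)). replace (f y - f x + f x) with (f y) in H0 by ring.
  lra.
Qed.

Definition sin_weight (L : nat) (x : R) : R := sin x * sin x ^ L.

Definition inv_weight_prim (L : nat) (x : R) : R :=
  RInt (fun z => / sin_weight L z) (PI / 2) x.

Lemma sin_weight_pos L x : 0 < x < PI -> 0 < sin_weight L x.
Proof.
  intros Hx. pose proof (sin_gt_0 x ltac:(lra) ltac:(lra)).
  pose proof (sin_pow_pos_le1 x L Hx). unfold sin_weight. nra.
Qed.

Lemma inv_weight_continuous L z : 0 < z < PI -> continuous (fun z => / sin_weight L z) z.
Proof.
  intros Hz. pose proof (sin_weight_pos L z Hz).
  apply (ex_derive_continuous (K := R_AbsRing) (V := R_NormedModule)).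
  unfold sin_weight in *. auto_derive. lra.
Qed.

Lemma inv_weight_prim_derive L x :
  0 < x < PI -> derivable_pt_lim (inv_weight_prim L) x (/ sin_weight L x).
Proof.
  intros Hx. apply is_derive_Reals.
  change (/ sin_weight L x) with ((fun z => / sin_weight L z) x).
  apply (is_derive_RInt _ (inv_weight_prim L) (PI / 2)); [|apply inv_weight_continuous; auto].
  assert (Hr : 0 < Rmin x (PI - x) / 2) by (apply Rlt_mult_inv_pos; [apply Rmin_pos|]; lra).
  exists (mkposreal _ Hr). intros b Hb. simpl in Hb.
  change (Rabs (b - x) < Rmin x (PI - x) / 2) in Hb. apply Rabs_lt_between in Hb.
  apply (RInt_correct (V := R_CompleteNormedModule)).
  apply (ex_RInt_continuous (V := R_CompleteNormedModule)). intros z Hz.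
  apply inv_weight_continuous.
  pose proof (Rmin_l x (PI - x)). pose proof (Rmin_r x (PI - x)).
  assert (Rmin (PI / 2) b >= Rmin x (PI - x) / 2) by (apply Rmin_case; lra).
  assert (Rmax (PI / 2) b <= PI - Rmin x (PI - x) / 2) by (apply Rmax_case; lra).
  lra.
Qed.

Lemma inv_weight_prim_half L : inv_weight_prim L (PI / 2) = 0.
Proof. apply (RInt_point (V := R_CompleteNormedModule)). Qed.

Lemma inv_weight_prim_le L x y :
  0 < x -> x <= y -> y < PI -> inv_weight_prim L x <= inv_weight_prim L y.
Proof.
  apply (nondecreasing_of_deriv_nonneg _ (fun z => / sin_weight L z)).
  - apply inv_weight_prim_derive.
  - intros z Hz. left. apply Rinv_0_lt_compat, sin_weight_pos; lra.
Qed.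

(* [inv_weight_prim L + cos / sin ^ L] is nonincreasing and vanishes at [PI / 2]. *)
Lemma inv_weight_prim_bound L x :
  (1 <= L)%nat -> 0 < x <= PI / 2 -> sin x ^ L * Rabs (inv_weight_prim L x) <= 1.
Proof.
  intros HL Hx. pose proof PI_RGT_0.
  set (F := fun y => - (inv_weight_prim L y + cos y / sin y ^ L)).
  assert (Hmono : F x <= F (PI / 2)).
  { apply (nondecreasing_of_deriv_nonneg F
             (fun y => (INR L - 1) * cos y ^ 2 / sin_weight L y) 0 PI); try lra.
    - intros c Hc. pose proof (sin_gt_0 c ltac:(lra) ltac:(lra)).
      pose proof (sin_pow_pos_le1 c L Hc).
      pose proof (inv_weight_prim_derive L c Hc) as dG. apply is_derive_Reals in dG.
      apply is_derive_Reals. unfold F. auto_derive.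
      + repeat split; [eexists; eauto| lra].
      + replace (Derive (fun y => inv_weight_prim L y) c) with (/ sin_weight L c)
          by (symmetry; now apply is_derive_unique).
        unfold sin_weight.
        assert (HLs : sin c * sin c ^ Init.Nat.pred L = sin c ^ L) by (destruct L; [lia|]; simpl; ring).
        pose proof (sin2_cos2 c). unfold Rsqr in *.
        replace (sin c ^ Init.Nat.pred L) with (sin c ^ L / sin c) by (rewrite <- HLs; field; lra).
        field_simplify_eq; try lra. replace (sin c ^ 2) with (1 - cos c ^ 2) by nra. ring.
    - intros c Hc. pose proof (sin_weight_pos L c Hc).
      assert (1 <= INR L) by (apply (le_INR 1); auto).
      apply Rmult_le_pos; [apply Rmult_le_pos; [lra| apply pow2_ge_0]|].
      left; apply Rinv_0_lt_compat; lra. }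
  unfold F in Hmono. rewrite inv_weight_prim_half, cos_PI2 in Hmono.
  assert (Hle : inv_weight_prim L x <= 0)
    by (rewrite <- (inv_weight_prim_half L); apply inv_weight_prim_le; lra).
  pose proof (sin_pow_pos_le1 x L ltac:(lra)).
  assert (0 <= cos x) by (apply cos_ge_0; lra). pose proof (COS_bound x).
  rewrite Rabs_left1 by lra.
  replace (cos (PI / 2) / sin (PI / 2) ^ L) with 0 in Hmono by (rewrite cos_PI2; unfold Rdiv; ring).
  assert (Hb : - inv_weight_prim L x <= cos x / sin x ^ L) by lra.
  apply Rmult_le_compat_l with (r := sin x ^ L) in Hb; [|lra].
  replace (sin x ^ L * (cos x / sin x ^ L)) with (cos x) in Hb by (field; lra). lra.
Qed.

Lemma inv_weight_prim_1 x : 0 < x < PI -> inv_weight_prim 1 x = - (cos x / sin x).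
Proof.
  intros Hx. pose proof PI_RGT_0.
  set (D := fun y => inv_weight_prim 1 y + cos y / sin y).
  assert (dD : forall y, 0 < y < PI -> derivable_pt_lim D y 0).
  { intros y Hy. pose proof (sin_gt_0 y ltac:(lra) ltac:(lra)).
    pose proof (inv_weight_prim_derive 1 y Hy) as dG. apply is_derive_Reals in dG.
    apply is_derive_Reals. unfold D. auto_derive.
    - repeat split; [eexists; eauto| lra].
    - replace (Derive (fun z => inv_weight_prim 1 z) y) with (/ sin_weight 1 y)
        by (symmetry; now apply is_derive_unique).
      unfold sin_weight.
      pose proof (sin2_cos2 y). unfold Rsqr in *. field_simplify_eq; [nra| lra]. }
  assert (HD : forall y z, 0 < y -> y <= z -> z < PI -> D y = D z).
  { clearbody D. intros y z Hy Hyz Hz.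
    assert (D y <= D z)
      by (apply (nondecreasing_of_deriv_nonneg D (fun _ => 0) 0 PI); [exact dD| intros; lra | lra..]).
    assert (- D y <= - D z); [|lra].
    apply (nondecreasing_of_deriv_nonneg (fun y => - D y) (fun _ => - 0) 0 PI); [|intros; lra | lra..].
    intros c Hc. now apply derivable_pt_lim_opp, dD. }
  assert (HDhalf : D (PI / 2) = 0)
    by (unfold D; rewrite inv_weight_prim_half, cos_PI2, sin_PI2; field).
  assert (D x = 0).
  { destruct (Rle_or_lt x (PI / 2)); [rewrite (HD x (PI / 2))| rewrite <- (HD (PI / 2) x)]; lra. }
  unfold D in H0. lra.
Qed.

Definition pohozaev (L : nat) (p t : R) (U U1 : R -> R) (y : R) : R :=
  - sin_weight L y ^ 2 * (t - inv_weight_prim L y)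
      * (U1 y ^ 2 / 2 + Rpower (U y) (p + 1) / (p + 1))
  - sin_weight L y * U y * U1 y / 2.

Definition pohozaev_factor (L : nat) (p t y : R) : R :=
  p + 3 - 4 * (INR L + 1) * sin y ^ L * cos y * (t - inv_weight_prim L y).

Lemma pohozaev_derive L p t U U1 U2 x :
  0 < x < PI -> 0 < U x -> 0 < p ->
  derivable_pt_lim U x (U1 x) -> derivable_pt_lim U1 x (U2 x) ->
  U2 x + (INR L + 1) * (cos x / sin x) * U1 x + Rpower (U x) p = 0 ->
  derivable_pt_lim (pohozaev L p t U U1) x
    (sin_weight L x * Rpower (U x) (p + 1) * pohozaev_factor L p t x / (2 * (p + 1))).
Proof.
  intros Hx HU Hp dU dU1 Hode.
  pose proof (sin_gt_0 x ltac:(lra) ltac:(lra)) as Hs.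
  pose proof (sin_pow_pos_le1 x L Hx).
  pose proof (inv_weight_prim_derive L x Hx) as dG.
  apply is_derive_Reals in dU, dU1, dG.
  assert (dW : is_derive (fun y => Rpower y (p + 1)) (U x) ((p + 1) * Rpower (U x) p)).
  { apply is_derive_Reals. replace p with (p + 1 - 1) at 2 by ring.
    now apply derivable_pt_lim_power. }
  assert (HW : Rpower (U x) (p + 1) = U x * Rpower (U x) p)
    by (rewrite Rpower_plus, Rpower_1 by auto; ring).
  apply is_derive_Reals. unfold pohozaev, sin_weight.
  auto_derive.
  - repeat split; eexists; eauto.
  - replace (Derive (fun y => U y) x) with (U1 x) by (symmetry; now apply is_derive_unique).
    replace (Derive (fun y => U1 y) x) with (U2 x) by (symmetry; now apply is_derive_unique).
    replace (Derive (fun y => inv_weight_prim L y) x) with (/ sin_weight L x)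
      by (symmetry; now apply is_derive_unique).
    replace (Derive (fun y => Rpower y (p + 1)) (U x)) with ((p + 1) * Rpower (U x) p)
      by (symmetry; now apply is_derive_unique).
    assert (HL : sin x * (INR L * sin x ^ Init.Nat.pred L) = INR L * sin x ^ L)
      by (destruct L; simpl; ring).
    unfold pohozaev_factor, sin_weight. rewrite HW.
    replace (U2 x) with (- (INR L + 1) * (cos x / sin x) * U1 x - Rpower (U x) p) by lra.
    replace (sin x * (1 * cos x * (INR L * sin x ^ Init.Nat.pred L)))
      with (cos x * (INR L * sin x ^ L)) by (rewrite <- HL; ring).
    field. lra.
Qed.

Lemma energy_density_le p u v A B :
  0 < p -> 0 < u <= A -> Rabs v <= B ->
  0 <= v ^ 2 / 2 + Rpower u (p + 1) / (p + 1) <= B ^ 2 / 2 + Rpower A (p + 1) / (p + 1).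
Proof.
  intros Hp Hu Hv. pose proof (Rabs_pos v).
  assert (0 < Rpower u (p + 1) / (p + 1)) by (apply Rdiv_lt_0_compat; [apply Rpower_pos| lra]).
  assert (v ^ 2 <= B ^ 2) by (rewrite <- pow2_abs; apply pow_incr; lra).
  assert (Rpower u (p + 1) <= Rpower A (p + 1)) by (apply Rle_Rpower_l; lra).
  split; [nra|]. apply Rplus_le_compat; [lra|].
  apply Rmult_le_compat_r; [left; apply Rinv_0_lt_compat|]; lra.
Qed.

Lemma pohozaev_multiplier_abs_le L t y :
  0 < y < PI -> sin y ^ L * Rabs (inv_weight_prim L y) <= 1 ->
  Rabs (sin_weight L y ^ 2 * (t - inv_weight_prim L y)) <= sin_weight L y * (sin y * (Rabs t + 1)).
Proof.
  intros Hy HG.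
  pose proof (sin_gt_0 y ltac:(lra) ltac:(lra)). pose proof (sin_pow_pos_le1 y L Hy).
  pose proof (sin_weight_pos L y Hy).
  rewrite Rabs_mult, Rabs_pos_eq by (apply pow2_ge_0).
  pose proof (Rabs_triang t (- inv_weight_prim L y)) as Htri.
  rewrite Rabs_Ropp in Htri. fold (t - inv_weight_prim L y) in Htri.
  assert (sin y ^ L * Rabs (t - inv_weight_prim L y) <= Rabs t + 1)
    by (pose proof (Rabs_pos (inv_weight_prim L y)); pose proof (Rabs_pos t); nra).
  replace (sin_weight L y ^ 2 * Rabs (t - inv_weight_prim L y))
    with (sin_weight L y * sin y * (sin y ^ L * Rabs (t - inv_weight_prim L y)))
    by (unfold sin_weight; ring).
  rewrite Rmult_assoc. apply Rmult_le_compat_l; [lra|]. apply Rmult_le_compat_l; lra.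
Qed.

Lemma pohozaev_abs_le L p t U U1 y s A B :
  0 < p -> 0 < y < PI -> sin y ^ L * Rabs (inv_weight_prim L y) <= 1 -> sin y <= s ->
  0 < U y <= A -> Rabs (U1 y) <= B ->
  Rabs (pohozaev L p t U U1 y) <=
    s ^ S L * (s * (Rabs t + 1) * (B ^ 2 / 2 + Rpower A (p + 1) / (p + 1)) + A * B / 2).
Proof.
  intros Hp Hy HG Hys HU HU1.
  pose proof (sin_gt_0 y ltac:(lra) ltac:(lra)).
  pose proof (Rabs_pos t). pose proof (Rabs_pos (U1 y)).
  assert (Hw : 0 < sin_weight L y <= s ^ S L).
  { split; [apply sin_weight_pos; lra|]. unfold sin_weight. simpl.
    apply Rmult_le_compat; try lra; [apply pow_le; lra| apply pow_incr; lra]. }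
  pose proof (energy_density_le p (U y) (U1 y) A B Hp HU HU1) as HQ.
  pose proof (pohozaev_multiplier_abs_le L t y Hy HG) as Hmult.
  set (Q := U1 y ^ 2 / 2 + Rpower (U y) (p + 1) / (p + 1)) in *.
  set (QB := B ^ 2 / 2 + Rpower A (p + 1) / (p + 1)) in *.
  set (w := sin_weight L y) in *.
  assert (E1 : Rabs (w ^ 2 * (t - inv_weight_prim L y) * Q) <= w * (s * (Rabs t + 1) * QB)).
  { rewrite Rabs_mult, (Rabs_pos_eq Q) by lra.
    apply Rle_trans with (w * (sin y * (Rabs t + 1)) * Q); [apply Rmult_le_compat_r; lra|].
    rewrite Rmult_assoc. apply Rmult_le_compat_l; [lra|].
    apply Rmult_le_compat; [nra| lra| apply Rmult_le_compat_r; lra| lra]. }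
  assert (E2 : Rabs (w * U y * U1 y / 2) <= w * (A * B / 2)).
  { rewrite Rabs_div, !Rabs_mult, (Rabs_pos_eq w), (Rabs_pos_eq (U y)), (Rabs_pos_eq 2) by lra.
    assert (U y * Rabs (U1 y) <= A * B) by (apply Rmult_le_compat; lra). nra. }
  assert (0 <= s * (Rabs t + 1) * QB + A * B / 2).
  { assert (0 <= A * B) by nra. assert (0 <= s * (Rabs t + 1) * QB) by (repeat apply Rmult_le_pos; lra).
    lra. }
  replace (pohozaev L p t U U1 y) with (- (w ^ 2 * (t - inv_weight_prim L y) * Q) + - (w * U y * U1 y / 2))
    by (unfold pohozaev, Q, w; ring).
  eapply Rle_trans; [apply Rabs_triang|]. rewrite !Rabs_Ropp.
  apply Rle_trans with (w * (s * (Rabs t + 1) * QB + A * B / 2)); [lra|].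
  apply Rmult_le_compat_r; lra.
Qed.

Lemma squeezed_nondecreasing_deriv_zero (P D : R -> R) T :
  (forall x, 0 < x < T -> derivable_pt_lim P x (D x)) ->
  (forall x, 0 < x < T -> 0 <= D x) ->
  (forall x e, 0 < x -> e > 0 -> exists y, 0 < y < x /\ P y >= - e) ->
  (forall x e, 0 < x < T -> e > 0 -> exists y, x < y < T /\ P y <= e) ->
  forall a b, 0 < a -> a < b -> b < T -> exists c, a < c < b /\ D c = 0.
Proof.
  intros HD HDpos H0 HT.
  pose proof (nondecreasing_of_deriv_nonneg P D 0 T HD HDpos) as mono.
  assert (Hzero : forall x, 0 < x < T -> P x = 0).
  { intros x Hx. apply Rle_antisym.
    - destruct (Rle_or_lt (P x) 0) as [h|h]; auto.
      destruct (HT x (P x / 2) Hx) as [y [Hy HPy]]; [lra|].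
      pose proof (mono x y ltac:(lra) ltac:(lra) ltac:(lra)). lra.
    - destruct (Rle_or_lt 0 (P x)) as [h|h]; auto.
      destruct (H0 x (- P x / 2)) as [y [Hy HPy]]; [lra..|].
      pose proof (mono y x ltac:(lra) ltac:(lra) ltac:(lra)). lra. }
  intros a b Ha Hab HbT.
  destruct (MVT_cor2 P D a b Hab) as [c [Hc Hcab]]; [intros c Hc; apply HD; lra|].
  exists c. split; auto.
  rewrite (Hzero a), (Hzero b) in Hc by lra.
  assert (Hz : D c * (b - a) = 0) by lra.
  apply Rmult_integral in Hz. destruct Hz; lra.
Qed.

Definition positive_solution (L : nat) (p T : R) (U U1 : R -> R) : Prop :=
  exists U2 : R -> R, forall x, 0 < x < T ->
    derivable_pt_lim U x (U1 x) /\ derivable_pt_lim U1 x (U2 x) /\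
    U2 x + (INR L + 1) * (cos x / sin x) * U1 x + Rpower (U x) p = 0 /\ 0 < U x.

Lemma pohozaev_le_cross_term L p t U U1 y :
  0 < p -> 0 < y < PI -> inv_weight_prim L y <= t -> 0 < U y ->
  pohozaev L p t U U1 y <= U y * Rabs (U1 y) / 2.
Proof.
  intros Hp Hy HG HU. unfold pohozaev.
  pose proof (sin_weight_pos L y Hy). pose proof (sin_pow_pos_le1 y L Hy).
  pose proof (sin_le_id y ltac:(lra)). pose proof (SIN_bound y).
  assert (Hw1 : sin_weight L y <= 1) by (unfold sin_weight; nra).
  assert (0 <= sin_weight L y ^ 2 * (t - inv_weight_prim L y)
               * (U1 y ^ 2 / 2 + Rpower (U y) (p + 1) / (p + 1))).
  { assert (0 < Rpower (U y) (p + 1) / (p + 1)) by (apply Rdiv_lt_0_compat; [apply Rpower_pos| lra]).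
    pose proof (pow2_ge_0 (U1 y)).
    apply Rmult_le_pos; [apply Rmult_le_pos; [apply pow2_ge_0| lra]| lra]. }
  assert (- (sin_weight L y * U y * U1 y) <= U y * Rabs (U1 y)).
  { pose proof (Rle_abs (- U1 y)) as Hab. rewrite Rabs_Ropp in Hab.
    pose proof (Rabs_pos (U1 y)).
    assert (sin_weight L y * U y * - U1 y <= sin_weight L y * U y * Rabs (U1 y))
      by (apply Rmult_le_compat_l; nra).
    assert (0 <= (1 - sin_weight L y) * (U y * Rabs (U1 y))) by (apply Rmult_le_pos; nra).
    nra. }
  lra.
Qed.

Lemma pohozaev_small_near_end L p th T U U1 :
  0 < p -> 0 < T <= th -> th < PI -> (forall x, 0 < x < T -> 0 < U x) ->
  cont_within 0 T U T -> U T = 0 -> cont_within 0 T U1 T ->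
  forall x e, 0 < x < T -> e > 0 ->
    exists y, x < y < T /\ pohozaev L p (inv_weight_prim L th) U U1 y <= e.
Proof.
  intros Hp HT Hth HU cU HUT cU1 x e Hx He.
  destruct (cont_within_bounded _ _ _ _ cU1) as [d1 [Hd1 HB]].
  set (B := Rabs (U1 T) + 1). assert (HB0 : 0 < B) by (pose proof (Rabs_pos (U1 T)); unfold B; lra).
  destruct (cU (2 * e / B)) as [d2 [Hd2 HUs]]; [apply Rdiv_lt_0_compat; lra|].
  set (m := Rmin (Rmin d1 d2) (T - x)).
  assert (Hm : 0 < m) by (apply Rmin_pos; [apply Rmin_pos|]; lra).
  assert (m <= d1 /\ m <= d2 /\ m <= T - x).
  { pose proof (Rmin_l (Rmin d1 d2) (T - x)). pose proof (Rmin_r (Rmin d1 d2) (T - x)).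
    pose proof (Rmin_l d1 d2). pose proof (Rmin_r d1 d2). unfold m. lra. }
  set (y := T - m / 2). exists y. split; [unfold y; lra|].
  assert (Hdist : Rabs (y - T) = m / 2) by (unfold y; rewrite Rabs_left; lra).
  specialize (HB y ltac:(unfold y; lra) ltac:(lra)).
  specialize (HUs y ltac:(unfold y; lra) ltac:(lra)). rewrite HUT, Rminus_0_r in HUs.
  pose proof (HU y ltac:(unfold y; lra)). rewrite Rabs_pos_eq in HUs by lra.
  eapply Rle_trans.
  - apply pohozaev_le_cross_term; auto; [unfold y; lra|].
    apply inv_weight_prim_le; unfold y; lra.
  - pose proof (Rabs_pos (U1 y)). fold B in HB.
    assert (Hprod : U y * Rabs (U1 y) <= 2 * e / B * B) by (apply Rmult_le_compat; lra).
    replace (2 * e / B * B) with (2 * e) in Hprod by (field; lra). lra.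
Qed.

Lemma pohozaev_factor_vanishes L p th T U U1 :
  0 < p -> 0 < T <= th -> th < PI -> positive_solution L p T U U1 ->
  cont_within 0 T U T -> U T = 0 -> cont_within 0 T U1 T ->
  (forall x e, 0 < x -> e > 0 ->
     exists y, 0 < y < x /\ Rabs (pohozaev L p (inv_weight_prim L th) U U1 y) <= e) ->
  (forall x, 0 < x < T -> 0 <= pohozaev_factor L p (inv_weight_prim L th) x) ->
  forall a b, 0 < a -> a < b -> b < T ->
    exists c, a < c < b /\ pohozaev_factor L p (inv_weight_prim L th) c = 0.
Proof.
  intros Hp HT Hth [U2 Hsol] cU HUT cU1 Hnear0 HE a b Ha Hab HbT.
  set (t := inv_weight_prim L th) in *.
  set (D := fun x => sin_weight L x * Rpower (U x) (p + 1) * pohozaev_factor L p t x / (2 * (p + 1))).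
  destruct (squeezed_nondecreasing_deriv_zero (pohozaev L p t U U1) D T) with (a := a) (b := b)
    as [c [Hc HDc]]; [| | | | lra | lra | lra |].
  - intros x Hx. destruct (Hsol x Hx) as [dU [dU1 [Hode HU]]].
    apply (pohozaev_derive L p t U U1 U2); auto; lra.
  - intros x Hx. pose proof (sin_weight_pos L x ltac:(lra)). pose proof (Rpower_pos (U x) (p + 1)).
    pose proof (HE x Hx). unfold D.
    apply Rmult_le_pos; [apply Rmult_le_pos; [apply Rmult_le_pos|]; lra|].
    left; apply Rinv_0_lt_compat; lra.
  - intros x e Hx He. destruct (Hnear0 x e Hx He) as [y [Hy HPy]].
    exists y. split; auto. apply Rabs_le_between in HPy. lra.
  - apply pohozaev_small_near_end; auto. intros x Hx. apply Hsol; auto.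
  - exists c. split; auto. unfold D in HDc.
    pose proof (sin_weight_pos L c ltac:(lra)). pose proof (Rpower_pos (U c) (p + 1)).
    assert (Hprod : sin_weight L c * Rpower (U c) (p + 1) * pohozaev_factor L p t c = 0).
    { replace (sin_weight L c * Rpower (U c) (p + 1) * pohozaev_factor L p t c)
        with (sin_weight L c * Rpower (U c) (p + 1) * pohozaev_factor L p t c / (2 * (p + 1)) * (2 * (p + 1)))
        by (field; lra).
      rewrite HDc. ring. }
    apply Rmult_integral in Hprod. destruct Hprod as [Hprod|]; auto.
    apply Rmult_integral in Hprod. destruct Hprod; lra.
Qed.

Lemma pohozaev_abs_le_id L p t U U1 y A B :
  (1 <= L)%nat -> 0 < p -> 0 < y <= 1 -> 0 < U y <= A -> Rabs (U1 y) <= B ->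
  Rabs (pohozaev L p t U U1 y) <=
    y * ((Rabs t + 1) * (B ^ 2 / 2 + Rpower A (p + 1) / (p + 1)) + A * B / 2).
Proof.
  intros HL Hp Hy HU HU1. pose proof PI2_1.
  pose proof (Rabs_pos t). pose proof (Rabs_pos (U1 y)).
  pose proof (energy_density_le p (U y) (U1 y) A B Hp HU HU1).
  eapply Rle_trans.
  - apply (pohozaev_abs_le L p t U U1 y y A B); auto; try lra.
    + apply inv_weight_prim_bound; auto; lra.
    + apply sin_le_id; lra.
  - change (y ^ S L) with (y * y ^ L). rewrite Rmult_assoc. apply Rmult_le_compat_l; [lra|].
    assert (y ^ L <= 1) by (rewrite <- (pow1 L); apply pow_incr; lra).
    pose proof (pow_le y L ltac:(lra)).
    set (QB := B ^ 2 / 2 + Rpower A (p + 1) / (p + 1)) in *.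
    assert (0 <= A * B) by nra.
    assert (0 <= (Rabs t + 1) * QB) by (apply Rmult_le_pos; lra).
    assert (0 <= y * (Rabs t + 1) * QB <= (Rabs t + 1) * QB) by (split; nra).
    nra.
Qed.

Lemma pohozaev_small_near0_regular L p t T U U1 :
  (1 <= L)%nat -> 0 < p -> 0 < T -> (forall x, 0 < x < T -> 0 < U x) ->
  cont_within 0 T U 0 -> cont_within 0 T U1 0 ->
  forall x e, 0 < x -> e > 0 -> exists y, 0 < y < x /\ Rabs (pohozaev L p t U U1 y) <= e.
Proof.
  intros HL Hp HT HU cU cU1 x e Hx He.
  destruct (cont_within_bounded _ _ _ _ cU) as [d1 [Hd1 HA]].
  destruct (cont_within_bounded _ _ _ _ cU1) as [d2 [Hd2 HB]].
  set (A := Rabs (U 0) + 1) in HA. set (B := Rabs (U1 0) + 1) in HB.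
  assert (HA0 : 0 < A) by (pose proof (Rabs_pos (U 0)); unfold A; lra).
  assert (HB0 : 0 < B) by (pose proof (Rabs_pos (U1 0)); unfold B; lra).
  set (K := (Rabs t + 1) * (B ^ 2 / 2 + Rpower A (p + 1) / (p + 1)) + A * B / 2).
  assert (HK : 0 < K).
  { pose proof (Rabs_pos t).
    assert (0 < Rpower A (p + 1) / (p + 1)) by (apply Rdiv_lt_0_compat; [apply Rpower_pos| lra]).
    unfold K. nra. }
  set (m := Rmin (Rmin (Rmin x d1) (Rmin d2 T)) (Rmin 1 (e / K))).
  assert (Hm : 0 < m).
  { assert (0 < e / K) by (apply Rdiv_lt_0_compat; lra). unfold m. repeat apply Rmin_pos; lra. }
  assert (Hmin : m <= x /\ m <= d1 /\ m <= d2 /\ m <= T /\ m <= 1 /\ m <= e / K).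
  { pose proof (Rmin_l (Rmin (Rmin x d1) (Rmin d2 T)) (Rmin 1 (e / K))).
    pose proof (Rmin_r (Rmin (Rmin x d1) (Rmin d2 T)) (Rmin 1 (e / K))).
    pose proof (Rmin_l (Rmin x d1) (Rmin d2 T)). pose proof (Rmin_r (Rmin x d1) (Rmin d2 T)).
    pose proof (Rmin_l x d1). pose proof (Rmin_r x d1). pose proof (Rmin_l d2 T).
    pose proof (Rmin_r d2 T). pose proof (Rmin_l 1 (e / K)). pose proof (Rmin_r 1 (e / K)).
    unfold m. lra. }
  assert (Hym : 0 < m / 2 < m) by lra.
  set (y := m / 2) in *. clearbody y.
  exists y. split; [lra|].
  eapply Rle_trans.
  - apply (pohozaev_abs_le_id L p t U U1 y A B); auto; try lra.
    + split; [apply HU; lra|]. apply Rle_trans with (Rabs (U y)); [apply Rle_abs|].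
      apply HA; [lra| rewrite Rminus_0_r, Rabs_pos_eq; lra].
    + apply HB; [lra| rewrite Rminus_0_r, Rabs_pos_eq; lra].
  - fold K. apply Rmult_le_reg_r with (/ K); [apply Rinv_0_lt_compat; lra|].
    rewrite Rmult_assoc, Rinv_r by lra. unfold Rdiv in Hmin. lra.
Qed.

Lemma mvt_slope_bound (f f' : R -> R) a b M :
  a < b -> (forall c, a <= c <= b -> derivable_pt_lim f c (f' c)) ->
  0 < f a <= M -> 0 < f b <= M -> exists c, a < c < b /\ Rabs (f' c) * (b - a) <= M.
Proof.
  intros Hab Hd Ha Hb.
  destruct (MVT_cor2 f f' a b Hab Hd) as [c [Hc Hcab]].
  exists c. split; auto.
  rewrite <- (Rabs_pos_eq (b - a)), <- Rabs_mult, <- Hc by lra.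
  apply Rabs_le_between. lra.
Qed.

Lemma Rpower_div x y c : 0 < x -> 0 < y -> Rpower (x / y) c = Rpower x c / Rpower y c.
Proof.
  intros Hx Hy. unfold Rpower, Rdiv.
  rewrite ln_mult, ln_Rinv by (try apply Rinv_0_lt_compat; lra).
  rewrite <- exp_Ropp, <- exp_plus. f_equal. ring.
Qed.

Lemma Rpower_singular_scaling p mu0 z K :
  0 < z -> 0 < K -> mu0 * (p + 1) = 2 + 2 * mu0 ->
  Rpower (K / Rpower z mu0) (p + 1) = Rpower K (p + 1) / (z ^ 2 * Rpower z mu0 ^ 2).
Proof.
  intros Hz HK Hmu.
  rewrite Rpower_div, Rpower_mult, Hmu by (try apply Rpower_pos; lra).
  f_equal. rewrite Rpower_plus.
  replace 2 with (INR 2) at 1 by (simpl; ring). rewrite Rpower_pow by lra.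
  replace (2 * mu0) with (mu0 + mu0) by ring. rewrite Rpower_plus. ring.
Qed.

Lemma pohozaev_small_at_singular_scale L p t T U U1 K mu0 z :
  (1 <= L)%nat -> 0 < p -> 0 < mu0 -> mu0 * (p + 1) = 2 + 2 * mu0 -> 0 < K ->
  0 < z -> 2 * z <= 1 -> 2 * z < T ->
  (forall x, 0 < x < T -> derivable_pt_lim U x (U1 x)) ->
  (forall x, 0 < x < T -> 0 < U x) ->
  (forall tau, 0 < tau <= 2 * z -> U tau <= K / Rpower tau mu0) ->
  exists xi, z < xi < 2 * z /\
    Rabs (pohozaev L p t U U1 xi) <=
      2 ^ S L * (2 * (Rabs t + 1) * (K ^ 2 / 2 + Rpower K (p + 1) / (p + 1)) + K ^ 2 / 2)
      * (z ^ L / Rpower z mu0 ^ 2).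
Proof.
  intros HL Hp Hmu0 Hmu HK Hz Hz1 HzT dU HU HUsing.
  pose proof PI2_1.
  set (v := Rpower z mu0). assert (Hv : 0 < v) by apply Rpower_pos.
  assert (HUv : forall tau, z <= tau <= 2 * z -> 0 < U tau <= K / v).
  { intros tau Htau. split; [apply HU; lra|].
    apply Rle_trans with (K / Rpower tau mu0); [apply HUsing; lra|].
    apply Rmult_le_compat_l; [lra|]. apply Rinv_le_contravar; auto.
    apply Rle_Rpower_l; lra. }
  destruct (mvt_slope_bound U U1 z (2 * z) (K / v)) as [xi [Hxi Hslope]];
    [lra| intros c Hc; apply dU; lra| apply HUv; lra| apply HUv; lra|].
  replace (2 * z - z) with z in Hslope by ring.
  exists xi. split; auto.
  eapply Rle_trans.
  - apply (pohozaev_abs_le L p t U U1 xi (2 * z) (K / v) (K / (v * z))); try lra.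
    + apply inv_weight_prim_bound; auto; lra.
    + pose proof (sin_le_id xi ltac:(lra)). lra.
    + apply HUv; lra.
    + apply Rmult_le_reg_r with z; auto. replace (K / (v * z) * z) with (K / v) by (field; lra). lra.
  - right. unfold v. rewrite (Rpower_singular_scaling p mu0 z K) by auto. fold v.
    rewrite Rpow_mult_distr. simpl. field. lra.
Qed.

Lemma Rpower_le_of_le_root a eta z : 0 < a -> 0 < eta -> 0 < z <= Rpower eta (/ a) -> Rpower z a <= eta.
Proof.
  intros Ha He Hz. apply Rle_trans with (Rpower (Rpower eta (/ a)) a); [apply Rle_Rpower_l; lra|].
  rewrite Rpower_mult, Rinv_l, Rpower_1 by lra. lra.
Qed.

Lemma pohozaev_small_near0_singular L p t T U U1 K mu0 d :
  (1 <= L)%nat -> 0 < p -> 0 < mu0 -> mu0 * (p + 1) = 2 + 2 * mu0 -> 0 < INR L - 2 * mu0 ->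
  0 < T -> (forall x, 0 < x < T -> derivable_pt_lim U x (U1 x)) ->
  (forall x, 0 < x < T -> 0 < U x) ->
  0 < K -> 0 < d -> (forall tau, 0 < tau < d -> U tau <= K / Rpower tau mu0) ->
  forall x e, 0 < x -> e > 0 -> exists y, 0 < y < x /\ Rabs (pohozaev L p t U U1 y) <= e.
Proof.
  intros HL Hp Hmu0 Hmu HLmu HT dU HU HK Hd HUsing x e Hx He.
  set (C := 2 ^ S L * (2 * (Rabs t + 1) * (K ^ 2 / 2 + Rpower K (p + 1) / (p + 1)) + K ^ 2 / 2)).
  assert (HC : 0 < C).
  { assert (0 < Rpower K (p + 1) / (p + 1)) by (apply Rdiv_lt_0_compat; [apply Rpower_pos| lra]).
    pose proof (Rabs_pos t). pose proof (pow_lt 2 (S L) ltac:(lra)).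
    unfold C. apply Rmult_lt_0_compat; nra. }
  set (eta := e / C). assert (Heta : 0 < eta) by (apply Rdiv_lt_0_compat; lra).
  set (z0 := Rpower eta (/ (INR L - 2 * mu0))). assert (Hz0 : 0 < z0) by apply Rpower_pos.
  set (m := Rmin (Rmin x d) (Rmin T (Rmin 1 z0))).
  assert (Hm : 0 < m) by (unfold m; repeat apply Rmin_pos; lra).
  assert (Hmin : m <= x /\ m <= d /\ m <= T /\ m <= 1 /\ m <= z0).
  { pose proof (Rmin_l (Rmin x d) (Rmin T (Rmin 1 z0))).
    pose proof (Rmin_r (Rmin x d) (Rmin T (Rmin 1 z0))).
    pose proof (Rmin_l x d). pose proof (Rmin_r x d). pose proof (Rmin_l T (Rmin 1 z0)).
    pose proof (Rmin_r T (Rmin 1 z0)). pose proof (Rmin_l 1 z0). pose proof (Rmin_r 1 z0).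
    unfold m. lra. }
  destruct (pohozaev_small_at_singular_scale L p t T U U1 K mu0 (m / 4))
    as [xi [Hxi Hbound]]; try lra; auto.
  { intros tau Htau. apply HUsing. lra. }
  exists xi. split; [lra|]. fold C in Hbound.
  eapply Rle_trans; [exact Hbound|].
  assert (Hpow : (m / 4) ^ L / Rpower (m / 4) mu0 ^ 2 = Rpower (m / 4) (INR L - 2 * mu0)).
  { unfold Rminus. rewrite Rpower_plus, Rpower_pow, Rpower_Ropp by lra.
    replace (2 * mu0) with (mu0 + mu0) by ring. rewrite Rpower_plus. field.
    apply Rgt_not_eq, Rpower_pos. }
  rewrite Hpow.
  assert (Rpower (m / 4) (INR L - 2 * mu0) <= eta)
    by (apply Rpower_le_of_le_root; [lra | lra | fold z0; lra]).
  apply Rle_trans with (C * eta); [apply Rmult_le_compat_l; lra|].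
  unfold eta. right. field. lra.
Qed.

Lemma INR_SS_sub_1 L : INR (S (S L)) - 1 = INR L + 1.
Proof. rewrite !S_INR. ring. Qed.

Lemma regular_sol_pohozaev_factor_vanishes L p th T U :
  (1 <= L)%nat -> 0 < p -> 0 < T <= th -> th < PI -> regular_sol (S (S L)) p T U ->
  (forall x, 0 < x < T -> 0 <= pohozaev_factor L p (inv_weight_prim L th) x) ->
  forall a b, 0 < a -> a < b -> b < T ->
    exists c, a < c < b /\ pohozaev_factor L p (inv_weight_prim L th) c = 0.
Proof.
  intros HL Hp HT Hth [U1 [U2 [dU [dU1 [_ [_ [HUT [Hpos Hode]]]]]]]] HE.
  assert (Hend : forall f f', (forall x, 0 <= x <= T -> deriv_within 0 T f x (f' x)) ->
                   cont_within 0 T f 0 /\ cont_within 0 T f T).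
  { intros f f' Hf. split.
    - apply (deriv_within_cont 0 T f 0 (f' 0)), Hf; lra.
    - apply (deriv_within_cont 0 T f T (f' T)), Hf; lra. }
  destruct (Hend U U1 dU) as [cU0 cUT]. destruct (Hend U1 U2 dU1) as [cU10 cU1T].
  apply (pohozaev_factor_vanishes L p th T U U1); auto.
  - exists U2. intros x Hx. repeat split.
    + apply (deriv_within_interior 0 T); auto; apply dU; lra.
    + apply (deriv_within_interior 0 T); auto; apply dU1; lra.
    + rewrite <- INR_SS_sub_1. apply Hode; auto.
    + apply Hpos; lra.
  - apply (pohozaev_small_near0_regular L p _ T); auto; [lra|].
    intros x Hx. apply Hpos; lra.
Qed.

Lemma pS_exponent_facts L p : (1 <= L)%nat -> pS (S (S L)) < p ->
  1 < p /\ 0 < mu p /\ mu p * (p + 1) = 2 + 2 * mu p /\ 0 < INR L - 2 * mu p.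
Proof.
  intros HL Hp. unfold pS in Hp. rewrite !S_INR in Hp.
  assert (1 <= INR L) by (apply (le_INR 1); auto).
  replace (INR L + 1 + 1 - 2) with (INR L) in Hp by ring.
  assert (HpL : INR L + 4 < p * INR L).
  { apply Rmult_lt_compat_r with (r := INR L) in Hp; [|lra].
    replace ((INR L + 1 + 1 + 2) / INR L * INR L) with (INR L + 4) in Hp by (field; lra). lra. }
  assert (1 < p) by nra.
  unfold mu. repeat split; auto.
  - apply Rdiv_lt_0_compat; lra.
  - field; lra.
  - apply Rmult_lt_reg_r with (p - 1); [lra|].
    replace ((INR L - 2 * (2 / (p - 1))) * (p - 1)) with (INR L * (p - 1) - 4) by (field; lra). lra.
Qed.

Lemma Rpower_opp_le x q c : 0 <= c -> 0 < q <= x -> Rpower x (- c) <= Rpower q (- c).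
Proof.
  intros Hc Hq. rewrite !Rpower_Ropp.
  apply Rinv_le_contravar; [apply Rpower_pos| apply Rle_Rpower_l; lra].
Qed.

Lemma sing_profile_le N p tau : (3 <= N)%nat -> 1 < p -> 0 < tau <= 1 ->
  0 < sing_profile N p tau <=
    acoef N p * Rpower 2 (INR N - 2) * Rpower 2 (mu p) / Rpower tau (mu p).
Proof.
  intros HN Hp Htau.
  assert (HN3 : 3 <= INR N) by (replace 3 with (INR 3) by (simpl; ring); apply le_INR; auto).
  assert (Hmu : 0 < mu p) by (unfold mu; apply Rdiv_lt_0_compat; lra).
  pose proof (cos_ge_1_sub_sqr (tau / 2) ltac:(lra)).
  pose proof (tan_ge_half_id (tau / 2) ltac:(lra)).
  assert (Hcos : Rpower (cos (tau / 2)) (- (INR N - 2)) <= Rpower 2 (INR N - 2)).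
  { apply Rle_trans with (Rpower (/ 2) (- (INR N - 2))); [apply Rpower_opp_le; nra|].
    right. rewrite Rpower_Ropp. unfold Rpower. rewrite ln_Rinv, <- exp_Ropp by lra. f_equal. ring. }
  assert (Htan : Rpower (2 * tan (tau / 2)) (- mu p) <= Rpower 2 (mu p) / Rpower tau (mu p)).
  { apply Rle_trans with (Rpower (tau / 2) (- mu p)); [apply Rpower_opp_le; lra|].
    right. rewrite Rpower_Ropp, Rpower_div by lra. field. split; apply Rgt_not_eq, Rpower_pos. }
  unfold sing_profile, acoef. fold (acoef N p).
  pose proof (Rpower_pos (mu p * (INR N - 2 - mu p)) (mu p / 2)).
  pose proof (Rpower_pos (cos (tau / 2)) (- (INR N - 2))).
  pose proof (Rpower_pos (2 * tan (tau / 2)) (- mu p)).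
  split; [apply Rmult_lt_0_compat; [apply Rmult_lt_0_compat|]; auto|].
  replace (acoef N p * Rpower 2 (INR N - 2) * Rpower 2 (mu p) / Rpower tau (mu p))
    with (acoef N p * Rpower 2 (INR N - 2) * (Rpower 2 (mu p) / Rpower tau (mu p)))
    by (field; apply Rgt_not_eq, Rpower_pos).
  apply Rmult_le_compat; try lra; [apply Rmult_le_pos; unfold acoef; lra|].
  apply Rmult_le_compat_l; [unfold acoef; lra| exact Hcos].
Qed.

Lemma spow_pos p u : 0 < u -> spow p u = Rpower u p.
Proof.
  intros Hu. unfold spow. rewrite Rabs_pos_eq by lra.
  destruct (Rlt_dec 0 u); [|lra].
  replace p with ((p - 1) + 1) at 2 by ring. rewrite Rpower_plus, Rpower_1; auto.
Qed.

Lemma theta_star_pohozaev_factor_vanishes L p th Ts :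
  (1 <= L)%nat -> pS (S (S L)) < p -> Ts <= th -> th < PI -> is_Theta_star (S (S L)) p Ts ->
  (forall x, 0 < x < Ts -> 0 <= pohozaev_factor L p (inv_weight_prim L th) x) ->
  forall a b, 0 < a -> a < b -> b < Ts ->
    exists c, a < c < b /\ pohozaev_factor L p (inv_weight_prim L th) c = 0.
Proof.
  intros HL Hp HTs Hth [HTs0 [U [U1 [U2 [T1 [HT1 [Hode [Hasym [Hpos HUT]]]]]]]]] HE.
  destruct (pS_exponent_facts L p HL Hp) as [Hp1 [Hmu [Hmup HLmu]]].
  assert (Hend : forall f f', derivable_pt_lim f Ts (f' Ts) -> cont_within 0 Ts f Ts)
    by (intros f f' Hf; apply (deriv_within_cont 0 Ts f Ts (f' Ts)), derivable_pt_lim_deriv_within, Hf).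
  set (K0 := acoef (S (S L)) p * Rpower 2 (INR (S (S L)) - 2) * Rpower 2 (mu p)).
  assert (HK0 : 0 < K0) by (unfold K0, acoef; repeat apply Rmult_lt_0_compat; apply Rpower_pos).
  destruct (Hasym 1 ltac:(lra)) as [da [Hda Hasb]].
  apply (pohozaev_factor_vanishes L p th Ts U U1); auto; try lra.
  - exists U2. intros x Hx. destruct (Hode x ltac:(lra)) as [dU [dU1 Heq]].
    split; [exact dU| split; [exact dU1| split; [|apply Hpos; auto]]].
    rewrite <- INR_SS_sub_1, <- spow_pos by (apply Hpos; auto). exact Heq.
  - apply (Hend U U1). apply Hode; lra.
  - apply (Hend U1 U2). apply Hode; lra.
  - apply (pohozaev_small_near0_singular L p _ Ts U U1 (2 * K0) (mu p) (Rmin da 1)); auto; try lra.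
    + intros x Hx. apply Hode; lra.
    + apply Rmin_pos; lra.
    + intros tau Htau. pose proof (Rmin_l da 1). pose proof (Rmin_r da 1).
      specialize (Hasb tau ltac:(lra)).
      destruct (sing_profile_le (S (S L)) p tau ltac:(lia) Hp1 ltac:(lra)) as [Hprof0 Hprof].
      fold K0 in Hprof. rewrite (Rabs_pos_eq (sing_profile _ p tau)) in Hasb by lra.
      apply Rabs_le_between in Hasb.
      replace (2 * K0 / Rpower tau (mu p)) with (2 * (K0 / Rpower tau (mu p)))
        by (field; apply Rgt_not_eq, Rpower_pos).
      lra.
Qed.

Lemma pohozaev_factor_pos L p th x :
  (1 <= L)%nat -> 4 * (INR L + 1) * (Rabs (inv_weight_prim L th) + 1) < p + 3 ->
  0 < x <= th -> th < PI -> 0 < pohozaev_factor L p (inv_weight_prim L th) x.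
Proof.
  intros HL Hp Hx Hth. unfold pohozaev_factor.
  set (t := inv_weight_prim L th) in *.
  pose proof (sin_pow_pos_le1 x L ltac:(lra)). pose proof (pos_INR L). pose proof (Rabs_pos t).
  assert (HG : 0 <= t - inv_weight_prim L x) by (unfold t; pose proof (inv_weight_prim_le L x th); lra).
  assert (Hprod : sin x ^ L * cos x * (t - inv_weight_prim L x) <= Rabs t + 1).
  { destruct (Rle_or_lt x (PI / 2)) as [h|h].
    - pose proof (inv_weight_prim_bound L x HL ltac:(lra)).
      assert (0 <= cos x) by (apply cos_ge_0; lra). pose proof (COS_bound x).
      pose proof (Rle_abs t). pose proof (Rle_abs (- inv_weight_prim L x)) as Hg.
      rewrite Rabs_Ropp in Hg.
      assert (sin x ^ L * (t - inv_weight_prim L x) <= Rabs t + 1) by nra.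
      assert (0 <= sin x ^ L * (t - inv_weight_prim L x)) by nra. nra.
    - assert (cos x < 0) by (apply cos_lt_0; lra).
      assert (0 <= sin x ^ L * (t - inv_weight_prim L x)) by nra. nra. }
  replace (4 * (INR L + 1) * sin x ^ L * cos x * (t - inv_weight_prim L x))
    with (4 * (INR L + 1) * (sin x ^ L * cos x * (t - inv_weight_prim L x))) by ring.
  nra.
Qed.

Lemma no_regular_sol_of_large_p L p th T :
  (1 <= L)%nat -> 4 * (INR L + 1) * (Rabs (inv_weight_prim L th) + 1) < p + 3 ->
  0 < T <= th -> th < PI -> ~ exists U, regular_sol (S (S L)) p T U.
Proof.
  intros HL Hbig HT Hth [U HU].
  assert (Hp : 0 < p) by (pose proof (pos_INR L); pose proof (Rabs_pos (inv_weight_prim L th)); nra).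
  destruct (regular_sol_pohozaev_factor_vanishes L p th T U HL Hp HT Hth HU) with (a := T / 4) (b := T / 2)
    as [c [Hc Hzero]]; try lra.
  - intros x Hx. left. apply pohozaev_factor_pos; auto; lra.
  - pose proof (pohozaev_factor_pos L p th c HL Hbig ltac:(lra) Hth). lra.
Qed.

Lemma theta_star_gt_of_large_p L p th Ts :
  (1 <= L)%nat -> pS (S (S L)) < p ->
  4 * (INR L + 1) * (Rabs (inv_weight_prim L th) + 1) < p + 3 ->
  th < PI -> is_Theta_star (S (S L)) p Ts -> th < Ts.
Proof.
  intros HL HpS Hbig Hth Hstar.
  destruct (Rlt_or_le th Ts) as [h|HTs]; auto. exfalso.
  pose proof (proj1 Hstar) as HTs0.
  destruct (theta_star_pohozaev_factor_vanishes L p th Ts HL HpS HTs Hth Hstar)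
    with (a := Ts / 4) (b := Ts / 2) as [c [Hc Hzero]]; try lra.
  - intros x Hx. left. apply pohozaev_factor_pos; auto; lra.
  - pose proof (pohozaev_factor_pos L p th c HL Hbig ltac:(lra) Hth). lra.
Qed.

Lemma eventually_large_p L th : exists M, forall p, p > M ->
  pS (S (S L)) < p /\ 4 * (INR L + 1) * (Rabs (inv_weight_prim L th) + 1) < p + 3.
Proof.
  exists (Rmax (pS (S (S L))) (4 * (INR L + 1) * (Rabs (inv_weight_prim L th) + 1))).
  intros p Hp. pose proof (Rmax_l (pS (S (S L))) (4 * (INR L + 1) * (Rabs (inv_weight_prim L th) + 1))).
  pose proof (Rmax_r (pS (S (S L))) (4 * (INR L + 1) * (Rabs (inv_weight_prim L th) + 1))).
  lra.
Qed.

Lemma tends_to_PI_of_eventually_above (f : R -> R) :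
  (forall th, th < PI -> exists M, forall p, p > M -> th < f p < PI) -> tends_at_infty f PI.
Proof.
  intros H e He. destruct (H (PI - e)) as [M HM]; [lra|].
  exists M. intros p Hp. specialize (HM p Hp). rewrite Rabs_left; lra.
Qed.

Lemma Tlow_eventually_above L (Tlow : R -> R) :
  (1 <= L)%nat ->
  (forall p, pS (S (S L)) < p ->
     Tlow p < PI /\ forall T, Tlow p < T < PI -> exists U, regular_sol (S (S L)) p T U) ->
  forall th, th < PI -> exists M, forall p, p > M -> th < Tlow p < PI.
Proof.
  intros HL Hlow th Hth. pose proof PI_RGT_0.
  set (th' := (Rmax th 0 + PI) / 2).
  assert (Hth' : th < th' /\ 0 < th' < PI)
    by (pose proof (Rmax_l th 0); pose proof (Rmax_r th 0); pose proof (Rmax_lub_lt th 0 PI Hth H);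
        unfold th'; lra).
  destruct (eventually_large_p L th') as [M HM]. exists M. intros p Hp.
  destruct (HM p Hp) as [HpS Hbig]. destruct (Hlow p HpS) as [HTpi Hex].
  split; auto.
  destruct (Rlt_or_le th (Tlow p)) as [h|h]; auto. exfalso.
  apply (no_regular_sol_of_large_p L p th' th'); auto; try lra.
  apply Hex. lra.
Qed.

Lemma Tstar_eventually_above L (Tstar : R -> R) :
  (1 <= L)%nat -> (forall p, pS (S (S L)) < p -> is_Theta_star (S (S L)) p (Tstar p)) ->
  forall th, th < PI -> exists M, forall p, p > M -> th < Tstar p < PI.
Proof.
  intros HL Hstar th Hth.
  destruct (eventually_large_p L th) as [M HM]. exists M. intros p Hp.
  destruct (HM p Hp) as [HpS Hbig]. pose proof (Hstar p HpS) as Hs.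
  split; [apply (theta_star_gt_of_large_p L p); auto| apply Hs].
Qed.

Lemma pohozaev_factor_N3 p x : p >= 5 -> 0 < x < PI ->
  let S := 4 / (p - 1) in
  pohozaev_factor 1 p (inv_weight_prim 1 (PI - asin S)) x
  = 4 * ((1 + S) * sin x - cos (asin S) * cos x) ^ 2 / ((1 + S) * S).
Proof.
  intros Hp Hx S.
  assert (HS : 0 < S <= 1).
  { unfold S. split; [apply Rdiv_lt_0_compat; lra|].
    apply Rmult_le_reg_r with (p - 1); [lra|]. unfold Rdiv. rewrite Rmult_assoc, Rinv_l; lra. }
  pose proof (asin_pos S HS). pose proof (asin_bound S).
  assert (HC2 : cos (asin S) ^ 2 = 1 - S ^ 2)
    by (rewrite cos_asin by lra; rewrite pow2_sqrt; [unfold Rsqr; ring| unfold Rsqr; nra]).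
  pose proof (sin_gt_0 x ltac:(lra) ltac:(lra)). pose proof (sin2_cos2 x). unfold Rsqr in *.
  unfold pohozaev_factor. rewrite !inv_weight_prim_1 by lra.
  rewrite sin_minus, cos_minus, sin_PI, cos_PI, sin_asin by lra.
  replace p with (4 / S + 1) by (unfold S; field; lra). simpl INR.
  field_simplify_eq; [|lra].
  rewrite HC2. replace (sin x ^ 2) with (1 - cos x ^ 2) by nra. ring.
Qed.

Lemma no_regular_sol_N3 p :
  p >= 5 -> forall T, 0 < T <= PI - asin (4 / (p - 1)) -> ~ exists U, regular_sol 3 p T U.
Proof.
  intros Hp T HT [U HU].
  set (S := 4 / (p - 1)) in *.
  assert (HS : 0 < S <= 1).
  { unfold S. split; [apply Rdiv_lt_0_compat; lra|].
    apply Rmult_le_reg_r with (p - 1); [lra|]. unfold Rdiv. rewrite Rmult_assoc, Rinv_l; lra. }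
  pose proof (asin_pos S HS).
  set (C := cos (asin S)).
  assert (HE : forall x, 0 < x < PI ->
            pohozaev_factor 1 p (inv_weight_prim 1 (PI - asin S)) x
            = 4 * ((1 + S) * sin x - C * cos x) ^ 2 / ((1 + S) * S))
    by (intros; now apply pohozaev_factor_N3).
  assert (Hzero : forall a b, 0 < a -> a < b -> b < T -> exists c, a < c < b /\ (1 + S) * sin c = C * cos c).
  { intros a b Ha Hab Hb.
    destruct (regular_sol_pohozaev_factor_vanishes 1 p (PI - asin S) T U) with (a := a) (b := b)
      as [c [Hc Hc0]]; auto; try lra.
    - intros x Hx. rewrite HE by lra.
      apply Rmult_le_pos; [apply Rmult_le_pos; [lra| apply pow2_ge_0]|].
      left. apply Rinv_0_lt_compat. nra.
    - exists c. split; auto. rewrite HE in Hc0 by lra.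
      assert (((1 + S) * sin c - C * cos c) ^ 2 = 0).
      { apply Rmult_eq_reg_l with (4 / ((1 + S) * S)); [|apply Rgt_not_eq, Rdiv_lt_0_compat; nra].
        rewrite Rmult_0_r, <- Hc0. field. lra. }
      nra. }
  destruct (Hzero (T / 4) (T / 2)) as [c1 [Hc1 E1]]; try lra.
  destruct (Hzero (T / 2) (3 * T / 4)) as [c2 [Hc2 E2]]; try lra.
  assert (Hsin : 0 < sin (c2 - c1)) by (apply sin_gt_0; lra).
  rewrite sin_minus in Hsin.
  assert ((1 + S) * (sin c2 * cos c1 - cos c2 * sin c1) = 0).
  { replace ((1 + S) * (sin c2 * cos c1 - cos c2 * sin c1))
      with ((1 + S) * sin c2 * cos c1 - cos c2 * ((1 + S) * sin c1)) by ring.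
    rewrite E1, E2. ring. }
  nra.
Qed.

Theorem theoremD (N : nat) (HN : (3 <= N)%nat) (Tlow Tstar : R -> R)
  (Hlow : forall p, p > pS N ->
     0 < Tlow p < PI /\
     (forall T, 0 < T < Tlow p -> ~ exists U, regular_sol N p T U) /\
     (forall T, Tlow p < T < PI -> exists U, regular_sol N p T U))
  (Hstar : forall p, p > pS N -> is_Theta_star N p (Tstar p)) :
  tends_at_infty Tlow PI /\
  tends_at_infty Tstar PI /\
  (N = 3%nat ->
     (forall p, p >= 5 -> forall T, 0 < T <= PI - asin (4 / (p - 1)) ->
        ~ exists U, regular_sol N p T U) /\
     (forall p, p > 5 -> Tlow p >= PI - asin (4 / (p - 1)))).
Proof.
  destruct N as [|[|L]]; try lia.
  assert (HL : (1 <= L)%nat) by lia.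
  split; [|split].
  - apply tends_to_PI_of_eventually_above, (Tlow_eventually_above L); auto.
    intros p Hp. destruct (Hlow p Hp) as [[_ HTpi] [_ Hex]]. auto.
  - apply tends_to_PI_of_eventually_above, (Tstar_eventually_above L); auto.
  - intros HN3. injection HN3 as ->. split; [exact no_regular_sol_N3|].
    intros p Hp.
    assert (HpS : pS 3 = 5) by (unfold pS; simpl; field).
    destruct (Hlow p ltac:(lra)) as [[HT0 HTpi] [_ Hex]].
    assert (HS : 0 < 4 / (p - 1) <= 1).
    { split; [apply Rdiv_lt_0_compat; lra|].
      apply Rmult_le_reg_r with (p - 1); [lra|]. unfold Rdiv. rewrite Rmult_assoc, Rinv_l; lra. }
    pose proof (asin_pos _ HS).
    destruct (Rle_or_lt (PI - asin (4 / (p - 1))) (Tlow p)) as [h|h]; [lra|]. exfalso.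
    apply (no_regular_sol_N3 p ltac:(lra) ((Tlow p + (PI - asin (4 / (p - 1)))) / 2)); [lra|].
    apply Hex. lra.
Qed.
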